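(* Let $M>0$, $\tau>0$, $p'=\lfloor p/2\rfloor$, and for $\theta=(\theta_1,\dots,\theta_{p'})\in\{0,1\}^{p'}$ define $\Sigma(\theta)$ by $$\Sigma(\theta)^{-1}=M^{-1}I_p+\sum_{m=1}^{p'}\theta_m\frac{\tau}{\sqrt n}e_me_m^T.$$ If $\tau/\sqrt n\le M/3$ and $\tau/M\le1/3$, then there exists a positive constant $C$ such that $$\min_{H(\theta,\theta')\ge1}\frac{\|w_{GMV}(\Sigma(\theta'))-w_{GMV}(\Sigma(\theta))\|^2}{H(\theta,\theta')}\cdot\frac{p'}{2}\cdot\min_{H(\theta,\theta')=1}\|\mathbb{P}_\theta\wedge\mathbb{P}_{\theta'}\|\ \ge\ \frac{C}{np}$$ for all sufficiently large $n$.
   Context: $e_m$ is the $m$-th standard basis vector of $\mathbb{R}^p$. $H(\theta,\theta')=\sum_m|\theta_m-\theta'_m|$ is the Hamming distance. $\mathbb{P}_\theta$ is the joint law of $X_1,\dots,X_n$ i.i.d. $N_p(0,\Sigma(\theta))$. For probability measures $P,Q$ with densities $p,q$ w.r.t. a common dominating measure, $\|P\wedge Q\|=\int\min(p,q)$. For $\Sigma\in\mathcal{C}_p$ (symmetric positive definite), $w_{GMV}(\Sigma)=\Sigma^{-1}\mathbf{1}/(\mathbf{1}^T\Sigma^{-1}\mathbf{1})$, the minimizer of $w^T\Sigma w$ subject to $w^T\mathbf{1}=1$; $\|\cdot\|$ is the Euclidean norm. Here $p=p_n\to\infty$. *)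

From HB Require Import structures.
From mathcomp Require Import all_boot all_order all_algebra.
From mathcomp Require Import all_classical all_reals all_analysis.
Set Implicit Arguments. Unset Strict Implicit. Unset Printing Implicit Defensive.
Import Order.TTheory GRing.Theory Num.Theory.
Local Open Scope ring_scope.

Section Defs.
Variable R : realType.

Lemma half_le (p : nat) : (p./2 <= p)%N.
Proof. by rewrite -{2}(odd_double_half p) -addnn addnA leq_addl. Qed.

(* standard basis index e_m, m < p' = floor(p/2), seen inside 'I_p *)
Definition embm (p : nat) (m : 'I_(p./2)) : 'I_p := widen_ord (half_le p) m.

Definition Sigma_inv (M tau : R) (n p : nat) (th : {ffun 'I_(p./2) -> bool}) : 'M[R]_p :=
  M^-1 *: 1%:M + \sum_(m < p./2)
     (((th m)%:R * (tau / Num.sqrt (n%:R))) *: delta_mx (embm m) (embm m)).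

Definition Sigma (M tau : R) (n p : nat) (th : {ffun 'I_(p./2) -> bool}) : 'M[R]_p :=
  invmx (Sigma_inv M tau n th).

Definition ones (p : nat) : 'cV[R]_p := const_mx 1.

Definition w_GMV (p : nat) (S : 'M[R]_p) : 'cV[R]_p :=
  ((((ones p)^T *m invmx S *m ones p) 0 0)^-1) *: (invmx S *m ones p).

Definition sqnorm (p : nat) (v : 'cV[R]_p) : R := \sum_(i < p) (v i 0) ^+ 2.

Definition hamming (k : nat) (t t' : {ffun 'I_k -> bool}) : nat :=
  \sum_(m < k) (t m != t' m).

Definition gauss_dens (p : nat) (S : 'M[R]_p) (x : 'cV[R]_p) : R :=
  ((Num.sqrt (2 * pi)) ^+ p)^-1 * (Num.sqrt (\det S))^-1 *
  expR (- ((x^T *m invmx S *m x) 0 0) / 2).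

(* joint density of X_1..X_n iid N_p(0,S); row i of X is X_i^T *)
Definition joint_dens (n p : nat) (S : 'M[R]_p) (X : 'M[R]_(n, p)) : R :=
  \prod_(i < n) gauss_dens S (row i X)^T.

Local Open Scope ereal_scope.

(* iterated Lebesgue integral over R^k (for nonnegative integrands this is
   the integral w.r.t. Lebesgue measure on R^k, by Tonelli) *)
Fixpoint iint (k : nat) : ('rV[R]_k -> \bar R) -> \bar R :=
  match k return ('rV[R]_k -> \bar R) -> \bar R with
  | 0 => fun f => f 0%R
  | k'.+1 => fun f =>
      \int[@lebesgue_measure R]_x iint (fun v : 'rV[R]_k' => f (row_mx (x%:M) v))
  end.

Definition affinity (M tau : R) (n p : nat) (t t' : {ffun 'I_(p./2) -> bool}) : \bar R :=
  iint (fun v : 'rV[R]_(n * p) =>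
    (Num.min (joint_dens (Sigma M tau n t) (vec_mx v))
             (joint_dens (Sigma M tau n t') (vec_mx v)))%:E).

Definition ratio (M tau : R) (n p : nat) (t t' : {ffun 'I_(p./2) -> bool}) : R :=
  (sqnorm (w_GMV (Sigma M tau n t') - w_GMV (Sigma M tau n t)) / (hamming t t')%:R)%R.

Definition lhs (M tau : R) (n p : nat) : \bar R :=
  (\big[Order.min/+oo]_(tt : {ffun 'I_(p./2) -> bool} * {ffun 'I_(p./2) -> bool}
        | (1 <= hamming tt.1 tt.2)%N) (ratio M tau n tt.1 tt.2)%:E)
  * ((p./2)%:R / 2)%:E
  * (\big[Order.min/+oo]_(tt : {ffun 'I_(p./2) -> bool} * {ffun 'I_(p./2) -> bool}
        | hamming tt.1 tt.2 == 1%N) affinity M tau n tt.1 tt.2).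

End Defs.

(* Sigma(theta)^-1 is diagonal with entries 1/M + theta_m delta, delta = tau/sqrt n, so
   w_GMV(Sigma(theta)) is this diagonal normalised to sum one.  A coordinate where theta and
   theta' differ moves the weight by at least delta / (2 p (1/M + delta)), so the ratio is of
   order tau^2 / (n p^2).  For the affinity, integrating
   sqrt(uv) <= min(u,v)/B + B(u+v)/4 gives ||P /\ Q|| >= B^2/2, where B = int sqrt(p q) is
   the Bhattacharyya coefficient; for two Gaussian product laws whose precisions differ in n
   coordinates, from a = 1/M to a + delta, B^2 = (sqrt(a(a+delta)) / (a + delta/2))^n
   >= (1 - delta^2/(4a^2))^n >= exp(-tau^2 M^2 / 2).  Finally p'/2 >= p/6. *)

From Pilot Require Import Defs.
From HB Require Import structures.
From mathcomp Require Import all_boot all_order all_algebra.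
From mathcomp Require Import all_classical all_reals all_analysis.
From mathcomp Require Import measurable_realfun ring lra zify.
Import Order.TTheory GRing.Theory Num.Theory.
Local Open Scope classical_set_scope.
Local Open Scope ring_scope.
Set Implicit Arguments. Unset Strict Implicit. Unset Printing Implicit Defensive.

Section IteratedIntegral.
Variable R : realType.
Local Notation mu := (@lebesgue_measure R).

(* [jmeasurable F] : [F] is measurable on [T * R * ... * R], the row vector being split
   into its coordinates in the same order as in [iint]. *)
Fixpoint jmeasurable (k : nat) : forall d (T : measurableType d), (T -> 'rV[R]_k -> R) -> Prop :=
  match k with
  | 0 => fun d T F => measurable_fun setT (fun x => F x 0)
  | k'.+1 => fun d T F =>
      @jmeasurable k' _ (T * R)%type (fun z v => F z.1 (row_mx (z.2)%:M v))
  end.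

Definition jmeasurable_fun k (f : 'rV[R]_k -> R) := jmeasurable (fun _ : R => f).

Lemma row_mx_scalar_ord0 k (x : R) (v : 'rV[R]_k) : (row_mx x%:M v : 'rV_(k.+1)) 0 ord0 = x.
Proof.
rewrite mxE; case: splitP => [i _|i /= Hi]; last by [].
by rewrite ord1 mxE eqxx mulr1n.
Qed.

Lemma row_mx_scalar_lift k (x : R) (v : 'rV[R]_k) (j : 'I_k) :
  (row_mx x%:M v : 'rV_(k.+1)) 0 (lift ord0 j) = v 0 j.
Proof.
rewrite mxE; case: splitP => [i /= Hi|i /= Hi]; first by case: i Hi => -[].
by congr (v 0 _); apply: val_inj; move: Hi; rewrite /bump /= add1n; case.
Qed.

Lemma eq_jmeasurable k d (T : measurableType d) (F G : T -> 'rV[R]_k -> R) :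
  (forall x v, F x v = G x v) -> jmeasurable F -> jmeasurable G.
Proof.
elim: k d T F G => [|k IH] d T F G eFG /=; last by apply: IH => z v; rewrite eFG.
by have -> : (fun x => G x 0) = (fun x => F x 0) by apply: funext => x; rewrite eFG.
Qed.

Lemma jmeasurable_comp k d (T : measurableType d) (F : T -> 'rV[R]_k -> R)
  d' (T' : measurableType d') (c : T' -> T) :
  measurable_fun setT c -> jmeasurable F -> jmeasurable (fun x => F (c x)).
Proof.
elim: k d T F d' T' c => [|k IH] d T F d' T' c mc /= mF; first exact: measurableT_comp mF mc.
apply: (IH _ _ _ _ _ (fun z : T' * R => (c z.1, z.2))) mF.
by apply: measurable_fun_pair => //; exact: measurableT_comp mc measurable_fst.
Qed.

Lemma jmeasurable_cst k d (T : measurableType d) (g : T -> R) :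
  measurable_fun setT g -> jmeasurable (fun x (_ : 'rV[R]_k) => g x).
Proof.
elim: k d T g => [|k IH] d T g mg //=.
by apply: IH; exact: measurableT_comp mg measurable_fst.
Qed.

Lemma jmeasurable_op1 (h : R -> R) : measurable_fun setT h ->
  forall k d (T : measurableType d) (F : T -> 'rV[R]_k -> R),
  jmeasurable F -> jmeasurable (fun x v => h (F x v)).
Proof.
move=> mh; elim => [|k IH] d T F /= mF; first exact: measurableT_comp mh mF.
exact: IH.
Qed.

Lemma jmeasurable_op2 (h : R -> R -> R) :
  (forall d (T : measurableType d) (f g : T -> R), measurable_fun setT f ->
     measurable_fun setT g -> measurable_fun setT (fun x => h (f x) (g x))) ->
  forall k d (T : measurableType d) (F G : T -> 'rV[R]_k -> R),
  jmeasurable F -> jmeasurable G -> jmeasurable (fun x v => h (F x v) (G x v)).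
Proof.
move=> mh; elim => [|k IH] d T F G /= mF mG; first exact: mh.
exact: IH.
Qed.

Lemma jmeasurable_coord k d (T : measurableType d) (j : 'I_k) :
  jmeasurable (fun (_ : T) (v : 'rV[R]_k) => v 0 j).
Proof.
elim: k d T j => [|k IH] d T j; first by case: j.
have [->|[j' ->]] : j = ord0 \/ exists j', j = lift ord0 j'.
  by case: (unliftP ord0 j) => [j' ->|->]; [right; exists j' | left].
- apply: (eq_jmeasurable (F := fun z _ => z.2)).
    by move=> z v; rewrite row_mx_scalar_ord0.
  exact: jmeasurable_cst measurable_snd.
- apply: (eq_jmeasurable (F := fun z v => v 0 j')) (IH _ _ _).
  by move=> z v; rewrite row_mx_scalar_lift.
Qed.

Lemma jmeasurable_prod k d (T : measurableType d) (I : Type) (r : seq I)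
    (F : I -> T -> 'rV[R]_k -> R) :
  (forall i, jmeasurable (F i)) -> jmeasurable (fun x v => \prod_(i <- r) F i x v).
Proof.
move=> mF; elim: r => [|i r IH].
  apply: (eq_jmeasurable (F := fun _ _ => 1)); first by move=> x v; rewrite big_nil.
  exact: jmeasurable_cst (measurable_cst _).
apply: (eq_jmeasurable (F := fun x v => F i x v * \prod_(j <- r) F j x v)).
  by move=> x v; rewrite big_cons.
apply: (jmeasurable_op2 (h := *%R)) => // d' T' f g mf mg.
exact: measurable_funM.
Qed.

Lemma jmeasurable_fun_prod k (h : 'I_k -> R -> R) : (forall l, measurable_fun setT (h l)) ->
  jmeasurable_fun (fun v => \prod_(l < k) h l (v 0 l)).
Proof.
move=> mh; apply: (@jmeasurable_prod k _ R _ _ (fun l (_ : R) v => h l (v 0 l))) => l.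
exact: (jmeasurable_op1 (mh l) (jmeasurable_coord _ l)).
Qed.

Lemma jmeasurable_funZ k (c : R) (f : 'rV[R]_k -> R) :
  jmeasurable_fun f -> jmeasurable_fun (fun v => c * f v).
Proof.
by move=> mf; apply: (jmeasurable_op1 (h := fun y => c * y)) mf; exact: measurable_funM.
Qed.

Lemma jmeasurable_funD k (f g : 'rV[R]_k -> R) :
  jmeasurable_fun f -> jmeasurable_fun g -> jmeasurable_fun (fun v => f v + g v).
Proof.
by move=> mf mg; apply: (jmeasurable_op2 (h := +%R)) mf mg => *; exact: measurable_funD.
Qed.

Lemma jmeasurable_fun_min k (f g : 'rV[R]_k -> R) :
  jmeasurable_fun f -> jmeasurable_fun g -> jmeasurable_fun (fun v => Num.min (f v) (g v)).
Proof.
by move=> mf mg; apply: (jmeasurable_op2 (h := Num.min)) mf mg => *; exact: measurable_minr.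
Qed.

Lemma jmeasurable_fun_row_mx k (f : 'rV[R]_k.+1 -> R) (x : R) :
  jmeasurable_fun f -> jmeasurable_fun (fun v => f (row_mx x%:M v)).
Proof.
have mc : measurable_fun [set: R] (fun y : R => (y, x)).
  by apply: measurable_fun_pair => //; exact: measurable_cst.
exact: (jmeasurable_comp (T := (R * R)%type) (F := fun z v => f (row_mx z.2%:M v)) mc).
Qed.

Lemma iint_ge0 k (f : 'rV[R]_k -> \bar R) : (forall v, 0 <= f v)%E -> (0 <= iint f)%E.
Proof.
elim: k f => [|k IH] f f0 /=; first exact: f0.
by apply: integral_ge0 => x _; apply: IH.
Qed.

Lemma measurable_iint k d (T : measurableType d) (F : T -> 'rV[R]_k -> R) :
  jmeasurable F -> (forall x v, 0 <= F x v) ->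
  measurable_fun [set: T] (fun x => iint (fun v => (F x v)%:E)).
Proof.
elim: k d T F => [|k IH] d T F mF F0 /=; first exact/measurable_EFinP.
apply: (measurable_fun_fubini_tonelli_F (m2 := mu)
  (fun z : T * R => iint (fun v => (F z.1 (row_mx (z.2)%:M v))%:E))).
- exact: IH mF (fun z v => F0 _ _).
- by move=> z; apply: iint_ge0 => v; rewrite lee_fin.
Qed.

Lemma measurable_iint_row_mx k (f : 'rV[R]_k.+1 -> R) :
  jmeasurable_fun f -> (forall v, 0 <= f v) ->
  measurable_fun [set: R] (fun x => iint (fun v => (f (row_mx x%:M v))%:E)).
Proof.
move=> mf f0; apply: measurable_iint (fun _ _ => f0 _).
have mc : measurable_fun [set: R] (fun y : R => (y, y)) by exact: measurable_fun_pair.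
exact: (jmeasurable_comp (T := (R * R)%type) (F := fun z v => f (row_mx z.2%:M v)) mc mf).
Qed.

Lemma le_iint k (f g : 'rV[R]_k -> R) : jmeasurable_fun f -> jmeasurable_fun g ->
  (forall v, 0 <= f v) -> (forall v, f v <= g v) ->
  (iint (fun v => (f v)%:E) <= iint (fun v => (g v)%:E))%E.
Proof.
elim: k f g => [|k IH] f g mf mg f0 fg /=; first by rewrite lee_fin.
have g0 v : 0 <= g v by exact: le_trans (f0 v) (fg v).
apply: ge0_le_integral => //.
- by move=> x _; apply: iint_ge0 => v; rewrite lee_fin.
- exact: measurable_iint_row_mx.
- exact: measurable_iint_row_mx.
- by move=> x _; apply: IH => //; exact: jmeasurable_fun_row_mx.
Qed.

Lemma iintD k (f g : 'rV[R]_k -> R) : jmeasurable_fun f -> jmeasurable_fun g ->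
  (forall v, 0 <= f v) -> (forall v, 0 <= g v) ->
  iint (fun v => (f v + g v)%:E) = (iint (fun v => (f v)%:E) + iint (fun v => (g v)%:E))%E.
Proof.
elim: k f g => [|k IH] f g mf mg f0 g0 //=.
rewrite -ge0_integralD //.
- by apply: eq_integral => x _; apply: IH => //; exact: jmeasurable_fun_row_mx.
- by move=> x _; apply: iint_ge0 => v; rewrite lee_fin.
- exact: measurable_iint_row_mx.
- by move=> x _; apply: iint_ge0 => v; rewrite lee_fin.
- exact: measurable_iint_row_mx.
Qed.

Lemma iintZ k (c : R) (f : 'rV[R]_k -> R) : 0 <= c -> jmeasurable_fun f ->
  (forall v, 0 <= f v) ->
  iint (fun v => (c * f v)%:E) = (c%:E * iint (fun v => (f v)%:E))%E.
Proof.
elim: k f => [|k IH] f c0 mf f0 //=.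
rewrite -ge0_integralZl_EFin //.
- by apply: eq_integral => x _; apply: IH => //; exact: jmeasurable_fun_row_mx.
- by move=> x _; apply: iint_ge0 => v; rewrite lee_fin.
- exact: measurable_iint_row_mx.
Qed.

Lemma iint_prod k (h : 'I_k -> R -> R) (c : 'I_k -> R) :
  (forall l, measurable_fun setT (h l)) -> (forall l y, 0 <= h l y) ->
  (forall l, (\int[mu]_y (h l y)%:E)%E = (c l)%:E) ->
  iint (fun v => (\prod_(l < k) h l (v 0 l))%:E) = (\prod_(l < k) c l)%:E.
Proof.
elim: k h c => [|k IH] h c mh h0 hc /=; first by rewrite !big_ord0.
have c0 l : 0 <= c l.
  by rewrite -lee_fin -hc; apply: integral_ge0 => y _; rewrite lee_fin.
set C := \prod_(l < k) c (lift ord0 l).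
have C0 : 0 <= C by apply: prodr_ge0.
transitivity (\int[mu]_x (C * h ord0 x)%:E)%E.
  apply: eq_integral => x _.
  have -> : (fun v : 'rV_k => (\prod_(l < k.+1) h l (row_mx x%:M v 0 l))%:E) =
      (fun v => (h ord0 x * \prod_(l < k) h (lift ord0 l) (v 0 l))%:E).
    apply: funext => v; rewrite big_ord_recl row_mx_scalar_ord0.
    by under eq_bigr => l _ do rewrite row_mx_scalar_lift.
  rewrite iintZ //.
  - by rewrite (IH (fun l => h (lift ord0 l)) (fun l => c (lift ord0 l))) // -EFinM mulrC.
  - exact: (jmeasurable_fun_prod (fun l => mh (lift ord0 l))).
  - by move=> v; apply: prodr_ge0.
under eq_integral => x _ do rewrite EFinM.
rewrite ge0_integralZl_EFin //.
- by rewrite hc -EFinM big_ord_recl mulrC.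
- by move=> x _; rewrite lee_fin.
- by apply/measurable_EFinP; exact: mh.
Qed.

End IteratedIntegral.

Section Gaussian.
Variable R : realType.
Local Notation mu := (@lebesgue_measure R).

Definition normal_prec_pdf (d y : R) :=
  Num.sqrt d / Num.sqrt (2 * pi) * expR (- (d * y ^+ 2) / 2).

Lemma normal_prec_pdfE d y : 0 < d -> normal_prec_pdf d y = normal_pdf 0 (Num.sqrt d)^-1 y.
Proof.
move=> d0; rewrite /normal_pdf invr_eq0 sqrtr_eq0 leNgt d0 /= /normal_peak /normal_fun subr0.
have -> : (Num.sqrt d)^-1 ^+ 2 = d^-1 by rewrite exprVn sqr_sqrtr ?ltW.
rewrite /normal_prec_pdf; congr (_ * _).
  have -> : d^-1 * pi *+ 2 = d^-1 * (2 * pi) by rewrite -mulr_natl; ring.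
  rewrite [in RHS]sqrtrM ?invr_ge0 ?ltW // [in RHS]sqrtrV ?ltW // invfM invrK.
  by rewrite mulrC.
by congr expR; rewrite -mulr_natr; field; rewrite gt_eqF.
Qed.

Lemma normal_prec_pdf_ge0 d y : 0 <= normal_prec_pdf d y.
Proof. by rewrite mulr_ge0 ?expR_ge0 // divr_ge0 ?sqrtr_ge0. Qed.

Lemma measurable_normal_prec_pdf d : measurable_fun [set: R] (normal_prec_pdf d).
Proof.
apply: measurable_funM; first exact: measurable_cst.
apply: measurableT_comp; first exact: measurable_expR.
rewrite (_ : (fun x => _) = (fun x : R => (- d / 2) * (x * x))); last first.
  by apply: funext => x; rewrite expr2; field.
by apply: measurable_funM; [exact: measurable_cst | exact: measurable_funM].
Qed.

Lemma integral_normal_prec_pdf d : 0 < d -> (\int[mu]_y (normal_prec_pdf d y)%:E = 1)%E.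
Proof.
move=> d0; rewrite -(integral_normal_pdf 0 (Num.sqrt d)^-1).
by apply: eq_integral => y _; rewrite normal_prec_pdfE.
Qed.

(* The Bhattacharyya coefficient int sqrt(f_a f_b) of N(0, 1/a) and N(0, 1/b). *)
Definition bhatt (a b : R) := Num.sqrt (Num.sqrt (a * b)) / Num.sqrt ((a + b) / 2).

Definition normal_prec_gmean (a b y : R) := bhatt a b * normal_prec_pdf ((a + b) / 2) y.

Lemma bhatt_ge0 a b : 0 <= bhatt a b.
Proof. by rewrite divr_ge0 ?sqrtr_ge0. Qed.

Lemma bhattC a b : bhatt a b = bhatt b a.
Proof. by rewrite /bhatt [a * b]mulrC [a + b]addrC. Qed.

Lemma bhattxx a : 0 < a -> bhatt a a = 1.
Proof.
move=> a0; rewrite /bhatt -expr2 sqrtr_sqr ger0_norm ?ltW //.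
have -> : (a + a) / 2 = a by field.
by rewrite divff // sqrtr_eq0 -ltNge.
Qed.

Lemma normal_prec_gmean_ge0 a b y : 0 <= normal_prec_gmean a b y.
Proof. by rewrite mulr_ge0 ?bhatt_ge0 ?normal_prec_pdf_ge0. Qed.

Lemma measurable_normal_prec_gmean a b : measurable_fun [set: R] (normal_prec_gmean a b).
Proof. by apply: measurable_funM; [exact: measurable_cst | exact: measurable_normal_prec_pdf]. Qed.

Lemma integral_normal_prec_gmean a b : 0 < a -> 0 < b ->
  (\int[mu]_y (normal_prec_gmean a b y)%:E = (bhatt a b)%:E)%E.
Proof.
move=> a0 b0; under eq_integral => y _ do rewrite EFinM.
rewrite ge0_integralZl_EFin ?bhatt_ge0 //.
- by rewrite integral_normal_prec_pdf ?mule1 // divr_gt0 ?addr_gt0.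
- by move=> y _; rewrite lee_fin normal_prec_pdf_ge0.
- by apply/measurable_EFinP; exact: measurable_normal_prec_pdf.
Qed.

Lemma normal_prec_gmean_sqr a b y : 0 < a -> 0 < b ->
  normal_prec_gmean a b y ^+ 2 = normal_prec_pdf a y * normal_prec_pdf b y.
Proof.
move=> a0 b0; rewrite /normal_prec_gmean /bhatt /normal_prec_pdf.
have h0 : 0 < (a + b) / 2 by rewrite divr_gt0 ?addr_gt0.
have p0 : 0 < pi :> R by exact: pi_gt0.
rewrite !exprMn !exprVn !sqr_sqrtr ?sqrtr_ge0 ?ltW // ?mulr_ge0 ?ltW // ?mulr_gt0 //.
rewrite sqrtrM ?ltW // [expR _ ^+ 2]expr2 -!expRD.
have -> : - ((a + b) / 2 * y ^+ 2) / 2 + - ((a + b) / 2 * y ^+ 2) / 2 =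
   - (a * y ^+ 2) / 2 + - (b * y ^+ 2) / 2 by field.
rewrite expRD.
have s2 : Num.sqrt (2 * pi) ^+ 2 = 2 * pi :> R by rewrite sqr_sqrtr // mulr_ge0 ?ltW.
have s0 : Num.sqrt (2 * pi) != 0 :> R by rewrite sqrtr_eq0 -ltNge mulr_gt0.
move: s2 s0; set s := Num.sqrt (2 * pi) => s2 s0.
by rewrite -s2; field; rewrite s0 /= gt_eqF // addr_gt0.
Qed.

Lemma sqrtr_prod (I : Type) (r : seq I) (F : I -> R) : (forall i, 0 <= F i) ->
  Num.sqrt (\prod_(i <- r) F i) = \prod_(i <- r) Num.sqrt (F i).
Proof.
move=> F0; suff [] : 0 <= \prod_(i <- r) F i /\
    Num.sqrt (\prod_(i <- r) F i) = \prod_(i <- r) Num.sqrt (F i) by [].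
apply: (big_rec2 (fun a b => 0 <= a /\ Num.sqrt a = b)); first by rewrite sqrtr1.
by move=> i a b _ [a0 <-]; rewrite mulr_ge0 // sqrtrM.
Qed.

Lemma gauss_dens_diag p (d : 'rV[R]_p) (x : 'cV[R]_p) : (forall j, 0 < d 0 j) ->
  gauss_dens (invmx (diag_mx d)) x = \prod_j normal_prec_pdf (d 0 j) (x j 0).
Proof.
move=> d0; rewrite /gauss_dens invmxK det_inv det_diag.
have -> : (x^T *m diag_mx d *m x) 0 0 = \sum_j d 0 j * x j 0 ^+ 2.
  by rewrite mul_mx_diag !mxE; apply: eq_bigr => j _; rewrite !mxE expr2; ring.
rewrite sqrtrV ?prodr_ge0 // => [|j _]; last exact: ltW.
rewrite invrK sqrtr_prod => [|j]; last exact: ltW.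
rewrite /normal_prec_pdf !big_split /= -expR_sum prodr_const card_ord -exprVn.
congr (_ * _); first by rewrite mulrC.
by congr expR; rewrite -sumrN mulr_suml; apply: eq_bigr => j _; ring.
Qed.

End Gaussian.

Section CovarianceModel.
Variable R : realType.

Definition mxvec_col (n p : nat) (l : 'I_(n * p)) : 'I_p :=
  (enum_val (cast_ord (esym (mxvec_cast n p)) l)).2.

Lemma mxvec_colE n p (i : 'I_n) (j : 'I_p) : mxvec_col (mxvec_index i j) = j.
Proof. by rewrite /mxvec_col /mxvec_index cast_ordK enum_rankK. Qed.

Lemma prod_mxvec n p (G : 'I_(n * p) -> R) :
  \prod_(l < n * p) G l = \prod_(i < n) \prod_(j < p) G (mxvec_index i j).
Proof.
rewrite (reindex _ (curry_mxvec_bij _ _)) /= pair_bigA.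
by apply: eq_bigr => -[i j] _.
Qed.

Lemma prod_mxvec_col n p (F : 'I_p -> R) :
  \prod_(l < n * p) F (mxvec_col l) = (\prod_(j < p) F j) ^+ n.
Proof.
rewrite prod_mxvec; under eq_bigr => i _ do under eq_bigr => j _ do rewrite mxvec_colE.
by rewrite prodr_const card_ord.
Qed.

Lemma embm_inj p : injective (@embm p).
Proof. by move=> m m' /(congr1 val) /= e; apply: val_inj. Qed.

Lemma sum_embm_le p (F : 'I_p -> R) : (forall j, 0 <= F j) ->
  \sum_(m < p./2) F (embm m) <= \sum_(j < p) F j.
Proof.
move=> F0; rewrite (bigID (fun j : 'I_p => (j < p./2)%N)) /=.
rewrite -[X in X <= _]addr0 lerD ?sumr_ge0 //.
by rewrite (big_ord_narrow_cond (P := predT) (half_le p)).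
Qed.

Lemma sum_bool_le_card (T : finType) (f : T -> bool) : \sum_i ((f i)%:R : R) <= #|T|%:R.
Proof. by rewrite -sumr_const; apply: ler_sum => i _; case: (f i). Qed.

Lemma natr_double_half_le p : 2 * ((p./2)%:R : R) <= p%:R.
Proof. by rewrite -natrM ler_nat -{2}(odd_double_half p) mul2n leq_addl. Qed.

Variables (M tau : R) (n p : nat).
Hypotheses (M_gt0 : 0 < M) (tau_ge0 : 0 <= tau).
Local Notation theta := {ffun 'I_(p./2) -> bool}.

Definition perturb := tau / Num.sqrt n%:R.

Definition prec (th : theta) (j : 'I_p) : R :=
  M^-1 + \sum_(m < p./2) ((th m)%:R * perturb) * (embm m == j)%:R.

Lemma perturb_ge0 : 0 <= perturb.
Proof. by rewrite divr_ge0 ?sqrtr_ge0. Qed.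

Lemma prec_gt0 th j : 0 < prec th j.
Proof.
rewrite ltr_wpDr ?invr_gt0 // sumr_ge0 // => m _.
by rewrite !mulr_ge0 ?ler0n ?perturb_ge0.
Qed.

Lemma prec_embm th m : prec th (embm m) = M^-1 + (th m)%:R * perturb.
Proof.
rewrite /prec (bigD1 m) //= eqxx mulr1 big1 ?addr0 // => m' nm.
by rewrite (inj_eq (@embm_inj p)) (negbTE nm) mulr0.
Qed.

Lemma sum_prec th : \sum_j prec th j = p%:R * M^-1 + perturb * \sum_m (th m)%:R.
Proof.
rewrite big_split /= sumr_const card_ord mulr_natl; congr (_ + _).
rewrite exchange_big mulr_sumr; apply: eq_bigr => m _.
rewrite -mulr_sumr (bigD1 (embm m)) //= eqxx big1 ?addr0 ?mulr1 1?mulrC // => j nj.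
by rewrite eq_sym (negbTE nj).
Qed.

Lemma Sigma_invE th : Sigma_inv M tau n th = diag_mx (\row_j prec th j).
Proof.
apply/matrixP => i j; rewrite !mxE summxE.
under eq_bigr => k _ do rewrite !mxE.
case: (eqVneq i j) => [<-|ne].
  rewrite mulr1 mulr1n; congr (_ + _); apply: eq_bigr => k _.
  by rewrite andbb eq_sym.
rewrite mulr0 mulr0n add0r big1 // => k _.
case: (eqVneq i (embm k)) => [ei|]; last by rewrite mulr0.
case: (eqVneq j (embm k)) => [ej|]; last by rewrite andbF mulr0.
by move: ne; rewrite ei ej eqxx.
Qed.

Lemma w_GMV_Sigma th j : w_GMV (Sigma M tau n th) j 0 = prec th j / \sum_k prec th k.
Proof.
rewrite /w_GMV /Sigma invmxK Sigma_invE mul_mx_diag mul_diag_mx !mxE mulrC mulr1.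
by congr (_ * _^-1); apply: eq_bigr => k _; rewrite !mxE mulr1 mul1r.
Qed.

Lemma joint_dens_Sigma th v : joint_dens (Sigma M tau n th) (vec_mx v) =
  \prod_(l < n * p) normal_prec_pdf (prec th (mxvec_col l)) (v 0 l).
Proof.
rewrite /joint_dens prod_mxvec; apply: eq_bigr => i _.
rewrite /Sigma Sigma_invE gauss_dens_diag => [|j]; last by rewrite mxE prec_gt0.
by apply: eq_bigr => j _; rewrite mxvec_colE !mxE.
Qed.

End CovarianceModel.

Section WeightGap.
Variable R : realType.

(* The gap x of the perturbed weight satisfies x S1 S2 = dl S1 - a (S2 - S1) >= dl S1 / 2. *)
Lemma sqr_diff_ratio_ge (a dl S1 S2 q P : R) : 0 < a -> 0 < dl -> 0 < S1 -> 0 < S2 ->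
  S2 - S1 <= dl * q -> 2 * q * a <= S1 -> S2 <= P ->
  (dl / (2 * P)) ^+ 2 <= ((a + dl) / S2 - a / S1) ^+ 2.
Proof.
move=> a0 d0 S10 S20 h1 h2 h3.
set x := (a + dl) / S2 - a / S1.
have ex : x * (S1 * S2) = dl * S1 + a * (S1 - S2) by rewrite /x; field; rewrite !gt_eqF.
have P0 : 0 < P by exact: lt_le_trans S20 h3.
have hx : dl <= 2 * (x * S2).
  rewrite -(ler_pM2r S10); suff : dl * S1 / 2 <= x * (S1 * S2) by nra.
  by rewrite ex; nra.
have x0 : 0 <= x.
  have : 0 < x * S2 by nra.
  by rewrite pmulr_lgt0 // => /ltW.
have hx' : dl / (2 * P) <= x by rewrite ler_pdivrMr ?mulr_gt0 //; nra.
by rewrite ler_sqr ?nnegrE // divr_ge0 ?mulr_ge0 ?ltW.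
Qed.

Variables (M tau : R) (n p : nat).
Hypotheses (M_gt0 : 0 < M) (tau_gt0 : 0 < tau) (n_gt0 : (0 < n)%N) (p_gt0 : (0 < p)%N).
Local Notation theta := {ffun 'I_(p./2) -> bool}.
Local Notation gap := (perturb tau n / (2 * (p%:R * (M^-1 + perturb tau n)))).

Let tau_ge0 : 0 <= tau. Proof. exact: ltW. Qed.

Let perturb_gt0 : 0 < perturb tau n. Proof. by rewrite divr_gt0 ?sqrtr_gt0 ?ltr0n. Qed.

Lemma sum_prec_bounds (th : theta) : p%:R * M^-1 <= \sum_j prec M tau n th j <=
  p%:R * M^-1 + perturb tau n * (p./2)%:R.
Proof.
have k0 : 0 <= \sum_m ((th m)%:R : R) by apply: sumr_ge0 => m _; rewrite ler0n.
have := sum_bool_le_card R th; rewrite card_ord => k1.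
rewrite sum_prec lerDl lerD2l mulr_ge0 ?ler_pM2l ?perturb_ge0 //=.
Qed.

Lemma w_GMV_Sigma_gap (th th' : theta) m : th m != th' m ->
  gap ^+ 2 <= ((w_GMV (Sigma M tau n th') - w_GMV (Sigma M tau n th)) (embm m) 0) ^+ 2.
Proof.
have -> (A B : 'cV[R]_p) j : (A - B) j 0 = A j 0 - B j 0 by rewrite !mxE.
wlog th0 : th th' / th m = false => [hw ne|].
  have [thm|/negbTE thm] := orP (orbN (th m)); last exact: hw.
  have th'0 : th' m = false by move: ne; rewrite thm; case: (th' m).
  by rewrite -[X in _ <= X]sqrrN opprB; apply: hw; rewrite // eq_sym.
move=> /negPf; rewrite th0 => /negbFE th'1.
rewrite !w_GMV_Sigma !prec_embm th0 th'1 /= mul0r addr0 mul1r.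
have /andP[S1lo _] := sum_prec_bounds th.
have /andP[S2lo S2hi] := sum_prec_bounds th'.
set a := M^-1 in S1lo S2lo S2hi *; set dl := perturb tau n in S2hi *.
set q : R := (p./2)%:R in S2hi.
set S1 := \sum_k _ in S1lo *; set S2 := \sum_k _ in S2lo S2hi *.
have a0 : 0 < a by rewrite invr_gt0.
have pa0 : 0 < p%:R * a by rewrite mulr_gt0 ?ltr0n.
apply: (sqr_diff_ratio_ge (q := q)) => //.
- exact: lt_le_trans S1lo.
- exact: lt_le_trans S2lo.
- by rewrite lerBlDr; apply: le_trans S2hi _; rewrite addrC lerD2l.
- by apply: le_trans S1lo; rewrite ler_pM2r // natr_double_half_le.
- apply: le_trans S2hi _; rewrite mulrDr lerD2l mulrC ler_pM2r //.
  by rewrite ler_nat half_le.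
Qed.

Lemma sqnorm_w_GMV_Sigma_ge (th th' : theta) :
  (hamming th th')%:R * gap ^+ 2 <=
  sqnorm (w_GMV (Sigma M tau n th') - w_GMV (Sigma M tau n th)).
Proof.
set D := _ - _; apply: le_trans (sum_embm_le (fun j => sqr_ge0 (D j 0))).
rewrite /hamming natr_sum mulr_suml; apply: ler_sum => m _.
case: (eqVneq (th m) (th' m)) => [_|ne]; first by rewrite mul0r sqr_ge0.
by rewrite mul1r w_GMV_Sigma_gap.
Qed.

End WeightGap.

Section Affinity.
Variable R : realType.

Lemma bhatt_gt0 (a b : R) : 0 < a -> 0 < b -> 0 < bhatt a b.
Proof. by move=> a0 b0; rewrite divr_gt0 ?sqrtr_gt0 ?mulr_gt0 ?divr_gt0 ?addr_gt0. Qed.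

(* AM-GM in the form sqrt(uw) <= min/B + B max/4, after which max <= u + w. *)
Lemma sqrt_le_min_add (u w s B : R) : 0 <= u -> 0 <= w -> 0 <= s -> s ^+ 2 = u * w ->
  0 < B -> s <= B^-1 * Num.min u w + B / 4 * (u + w).
Proof.
wlog uw : u w / u <= w => [hw u0 w0 s0 e B0|u0 w0 s0 e B0].
  have /orP[uw|wu] := le_total u w; first exact: hw.
  by rewrite minC [u + w]addrC; apply: hw; rewrite // mulrC.
rewrite (min_idPl uw).
have [Bi0 B4] : 0 <= B^-1 /\ 0 <= B / 4 by rewrite invr_ge0 divr_ge0 ?ltW.
have amgm : s <= B^-1 * u + B / 4 * w.
  have exy : 4 * (B^-1 * u) * (B / 4 * w) = u * w by field; rewrite gt_eqF.
  suff : s ^+ 2 <= (B^-1 * u + B / 4 * w) ^+ 2.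
    by rewrite ler_sqr ?nnegrE // addr_ge0 // mulr_ge0.
  by rewrite e -exy; have := sqr_ge0 (B^-1 * u - B / 4 * w); nra.
apply: le_trans amgm _; rewrite lerD2l ler_pM2l ?divr_gt0 //; lra.
Qed.

Lemma iint_min_ge k (f g s : 'rV[R]_k -> R) (B : R) :
  jmeasurable_fun f -> jmeasurable_fun g -> jmeasurable_fun s ->
  (forall v, 0 <= f v) -> (forall v, 0 <= g v) -> (forall v, 0 <= s v) ->
  (forall v, s v ^+ 2 = f v * g v) ->
  iint (fun v => (f v)%:E) = 1%:E -> iint (fun v => (g v)%:E) = 1%:E ->
  iint (fun v => (s v)%:E) = B%:E -> 0 < B ->
  ((B ^+ 2 / 2)%:E <= iint (fun v => (Num.min (f v) (g v))%:E))%E.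
Proof.
move=> mf mg ms f0 g0 s0 e if1 ig1 is1 B0.
have m0 v : 0 <= Num.min (f v) (g v) by rewrite le_min f0 g0.
have fg0 v : 0 <= f v + g v by rewrite addr_ge0.
have mm := jmeasurable_fun_min mf mg.
have mfg := jmeasurable_funD mf mg.
have [c1 c2] : 0 <= B^-1 /\ 0 <= B / 4 by rewrite invr_ge0 divr_ge0 ?ltW.
have := le_iint ms (jmeasurable_funD (jmeasurable_funZ B^-1 mm) (jmeasurable_funZ (B / 4) mfg))
  s0 (fun v => sqrt_le_min_add (f0 v) (g0 v) (s0 v) (e v) B0).
rewrite is1 (iintD (jmeasurable_funZ _ mm) (jmeasurable_funZ _ mfg)
  (fun v => mulr_ge0 c1 (m0 v)) (fun v => mulr_ge0 c2 (fg0 v))).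
rewrite (iintZ c1 mm m0) (iintZ c2 mfg fg0) (iintD mf mg f0 g0) if1 ig1.
have := iint_ge0 (fun v => m0 v : (0 <= (Num.min (f v) (g v))%:E)%E).
case: (iint _) => [r| |] //= r0; last by rewrite leey.
rewrite -!EFinM -!EFinD !lee_fin => h.
have r_ge : B / 2 <= B^-1 * r by lra.
have -> : r = B * (B^-1 * r) by field; rewrite gt_eqF.
by move: r_ge; set t := B^-1 * r; nra.
Qed.

Lemma iint_min_normal_prod_ge k (d d' : 'I_k -> R) : (forall l, 0 < d l) -> (forall l, 0 < d' l) ->
  (((\prod_l bhatt (d l) (d' l)) ^+ 2 / 2)%:E <=
   iint (fun v => (Num.min (\prod_l normal_prec_pdf (d l) (v 0 l))
                           (\prod_l normal_prec_pdf (d' l) (v 0 l)))%:E))%E.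
Proof.
move=> d0 d'0.
have int1 (c : 'I_k -> R) : (forall l, 0 < c l) ->
    iint (fun v => (\prod_l normal_prec_pdf (c l) (v 0 l))%:E) = 1%:E.
  move=> c0; rewrite (iint_prod (h := fun l => normal_prec_pdf (c l)) (c := fun _ => 1)).
  - by rewrite big1.
  - by move=> l; exact: measurable_normal_prec_pdf.
  - by move=> l y; exact: normal_prec_pdf_ge0.
  - by move=> l; exact: integral_normal_prec_pdf.
apply: (iint_min_ge (s := fun v => \prod_l normal_prec_gmean (d l) (d' l) (v 0 l))).
- exact: jmeasurable_fun_prod (fun l => measurable_normal_prec_pdf _).
- exact: jmeasurable_fun_prod (fun l => measurable_normal_prec_pdf _).
- exact: jmeasurable_fun_prod (fun l => measurable_normal_prec_gmean _ _).
- by move=> v; apply: prodr_ge0 => l _; exact: normal_prec_pdf_ge0.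
- by move=> v; apply: prodr_ge0 => l _; exact: normal_prec_pdf_ge0.
- by move=> v; apply: prodr_ge0 => l _; exact: normal_prec_gmean_ge0.
- move=> v; rewrite -prodrXl -big_split; apply: eq_bigr => l _.
  exact: normal_prec_gmean_sqr.
- exact: int1.
- exact: int1.
- rewrite (iint_prod (h := fun l => normal_prec_gmean (d l) (d' l))
    (c := fun l => bhatt (d l) (d' l))) // => l.
  + exact: measurable_normal_prec_gmean.
  + exact: normal_prec_gmean_ge0.
  + by apply: integral_normal_prec_gmean.
- by apply: prodr_gt0 => l _; exact: bhatt_gt0.
Qed.

Lemma prod_bhatt_Sigma (M tau : R) (n p : nat) (t t' : {ffun 'I_(p./2) -> bool}) :
  0 < M -> 0 <= tau -> hamming t t' = 1%N ->
  \prod_(j < p) bhatt (prec M tau n t j) (prec M tau n t' j) = bhatt M^-1 (M^-1 + perturb tau n).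
Proof.
move=> M0 t0 /eqP/sum_nat_eq1[m0 [_ ne same]].
rewrite (bigD1 (embm m0)) //= big1 ?mulr1 => [|j nj]; last first.
  have -> : prec M tau n t j = prec M tau n t' j.
    congr (_ + _); apply: eq_bigr => m _.
    have [->|nm] := eqVneq m m0; first by rewrite eq_sym (negbTE nj) !mulr0.
    suff /eqP -> : t m == t' m by [].
    by move: (same m nm isT); case: (t m == t' m).
  by rewrite bhattxx // prec_gt0.
rewrite !prec_embm.
by case: (t m0) ne; case: (t' m0) => //= _; rewrite ?mul1r ?mul0r ?addr0 // bhattC.
Qed.

Lemma affinity_ge_bhatt (M tau : R) (n p : nat) (t t' : {ffun 'I_(p./2) -> bool}) :
  0 < M -> 0 <= tau -> hamming t t' = 1%N ->
  ((((bhatt M^-1 (M^-1 + perturb tau n)) ^+ n) ^+ 2 / 2)%:E <= affinity M tau n t t')%E.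
Proof.
move=> M0 t0 h1; rewrite /affinity (_ : (fun v => _) = (fun v : 'rV[R]_(n * p) =>
    (Num.min (\prod_l normal_prec_pdf (prec M tau n t (mxvec_col l)) (v 0 l))
             (\prod_l normal_prec_pdf (prec M tau n t' (mxvec_col l)) (v 0 l)))%:E)).
  2: by apply: funext => v; rewrite !joint_dens_Sigma.
rewrite -(prod_bhatt_Sigma n M0 t0 h1) -prod_mxvec_col.
by apply: iint_min_normal_prod_ge => l; exact: prec_gt0.
Qed.

End Affinity.

Section Bounds.
Variable R : realType.

(* bhatt^2 = sqrt(a (a + dl)) / (a + dl/2) = s/h <= 1 dominates (s/h)^2 = 1 - (dl/2)^2/h^2. *)
Lemma sqr_bhatt_ge (a dl : R) : 0 < a -> 0 <= dl ->
  1 - dl ^+ 2 / (4 * a ^+ 2) <= bhatt a (a + dl) ^+ 2.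
Proof.
move=> a0 d0; set h := a + dl / 2.
have h0 : 0 < h by rewrite ltr_wpDr ?divr_ge0.
have -> : bhatt a (a + dl) ^+ 2 = Num.sqrt (a * (a + dl)) / h.
  rewrite /bhatt (_ : (a + (a + dl)) / 2 = h); last by rewrite /h; field.
  by rewrite expr_div_n !sqr_sqrtr ?sqrtr_ge0 // ltW.
set s := Num.sqrt _; have s0 : 0 <= s := sqrtr_ge0 _.
have ss : s ^+ 2 = a * (a + dl) by rewrite sqr_sqrtr // mulr_ge0 ?addr_ge0 // ltW.
have sh1 : s / h <= 1.
  rewrite ler_pdivrMr // mul1r.
  suff : s ^+ 2 <= h ^+ 2 by rewrite ler_sqr ?nnegrE // ltW.
  by rewrite ss /h; nra.
apply: le_trans (_ : (s / h) ^+ 2 <= s / h); last first.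
  by rewrite expr2 ler_piMr // divr_ge0 // ltW.
have -> : (s / h) ^+ 2 = 1 - (dl / 2) ^+ 2 / h ^+ 2.
  by rewrite expr_div_n ss /h; field; rewrite gt_eqF //; lra.
have -> : dl ^+ 2 / (4 * a ^+ 2) = (dl / 2) ^+ 2 / a ^+ 2 by field; rewrite gt_eqF.
rewrite lerD2l lerN2 ler_wpM2l ?sqr_ge0 // lef_pV2 ?posrE ?exprn_gt0 //.
by rewrite /h; nra.
Qed.

Lemma expR_le_expn (x : R) (n : nat) : 0 <= x -> x <= 2^-1 ->
  expR (- (2 * x * n%:R)) <= (1 - x) ^+ n.
Proof.
move=> x0 x1.
have e1 : expR (- (2 * x)) <= 1 - x.
  have p1 : 0 < 1 + 2 * x by lra.
  rewrite expRN; apply: le_trans (_ : (1 + 2 * x)^-1 <= _).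
    by rewrite lef_pV2 ?posrE ?expR_gt0 // expR_ge1Dx.
  by rewrite -[X in X <= _]mulr1 ler_pdivrMl //; nra.
have -> : - (2 * x * n%:R) = n%:R * (- (2 * x)) by ring.
by rewrite expRM_natl lerXn2r ?nnegrE ?expR_ge0 //; lra.
Qed.

Lemma natr_le_3half (p : nat) : (2 <= p)%N -> p%:R <= 3 * (p./2)%:R :> R.
Proof.
move=> p2; rewrite -natrM ler_nat.
have := odd_double_half p; have := leq_b1 (odd p); rewrite -mul2n; lia.
Qed.

Lemma affinity_ge (M tau : R) (n p : nat) (t t' : {ffun 'I_(p./2) -> bool}) :
  0 < M -> 0 < tau -> tau ^+ 2 * M ^+ 2 <= n%:R -> hamming t t' = 1%N ->
  ((expR (- (tau ^+ 2 * M ^+ 2) / 2) / 2)%:E <= affinity M tau n t t')%E.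
Proof.
move=> M0 t0 hn h1; apply: le_trans (affinity_ge_bhatt n M0 (ltW t0) h1).
rewrite lee_fin ler_pM2r // -exprM mulnC exprM.
have nR : 0 < n%:R :> R by apply: lt_le_trans hn; rewrite mulr_gt0 ?exprn_gt0.
set x := perturb tau n ^+ 2 / (4 * M^-1 ^+ 2).
have xE : x = tau ^+ 2 * M ^+ 2 / (4 * n%:R).
  by rewrite /x /perturb expr_div_n sqr_sqrtr ?ler0n //; field; rewrite !gt_eqF.
have x0 : 0 <= x by rewrite xE divr_ge0 ?mulr_ge0 ?sqr_ge0 ?ltW.
have x1 : x <= 2^-1 by rewrite xE ler_pdivrMr ?mulr_gt0 //; lra.
have -> : expR (- (tau ^+ 2 * M ^+ 2) / 2) = expR (- (2 * x * n%:R)).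
  by rewrite xE; congr expR; field; rewrite gt_eqF.
apply: le_trans (expR_le_expn n x0 x1) _.
rewrite lerXn2r ?nnegrE ?sqr_ge0 //; first lra.
by apply: sqr_bhatt_ge; rewrite ?invr_gt0 ?perturb_ge0 ?ltW.
Qed.

Lemma ratio_ge (M tau : R) (n p : nat) (t t' : {ffun 'I_(p./2) -> bool}) :
  0 < M -> 0 < tau -> (0 < n)%N -> (0 < p)%N -> perturb tau n <= M / 3 ->
  (1 <= hamming t t')%N ->
  tau ^+ 2 / (4 * (M^-1 + M / 3) ^+ 2 * n%:R * p%:R ^+ 2) <= Defs.ratio M tau n t t'.
Proof.
move=> M0 t0 n0 p0 hd h1.
have hR : 0 < (hamming t t')%:R :> R by rewrite ltr0n.
rewrite /Defs.ratio ler_pdivlMr // mulrC.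
apply: le_trans (sqnorm_w_GMV_Sigma_ge M0 t0 n0 p0 t t'); rewrite ler_pM2l //.
have nR : 0 < n%:R :> R by rewrite ltr0n.
have pR : 0 < p%:R :> R by rewrite ltr0n.
set a := M^-1; set dl := perturb tau n; set K := a + M / 3.
have a0 : 0 < a by rewrite invr_gt0.
have dl0 : 0 < dl by rewrite divr_gt0 // sqrtr_gt0.
have K0 : 0 < K by rewrite addr_gt0 // divr_gt0.
have -> : tau ^+ 2 / (4 * K ^+ 2 * n%:R * p%:R ^+ 2) = (dl / (2 * (p%:R * K))) ^+ 2.
  by rewrite expr_div_n /dl /perturb expr_div_n sqr_sqrtr ?ler0n //; field; rewrite !gt_eqF.
have hle : dl / (2 * (p%:R * K)) <= dl / (2 * (p%:R * (a + dl))).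
  by rewrite ler_pM2l // lef_pV2 ?posrE ?mulr_gt0 // ?addr_gt0 // !ler_pM2l // lerD2l.
have lo0 : 0 <= dl / (2 * (p%:R * K)) by rewrite ltW // divr_gt0 // !mulr_gt0.
by rewrite lerXn2r ?nnegrE // (le_trans lo0 hle).
Qed.

Lemma lhs_ge_of_bounds (M tau : R) (n p : nat) (r A : R) : 0 <= r -> 0 <= A ->
  (forall t t' : {ffun 'I_(p./2) -> bool},
     (1 <= hamming t t')%N -> r <= Defs.ratio M tau n t t') ->
  (forall t t' : {ffun 'I_(p./2) -> bool},
     hamming t t' = 1%N -> (A%:E <= affinity M tau n t t')%E) ->
  ((r * ((p./2)%:R / 2) * A)%:E <= lhs M tau n p)%E.
Proof.
move=> r0 A0 hr hA; rewrite /lhs !EFinM.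
apply: lee_pmul; rewrite ?mule_ge0 ?lee_fin ?divr_ge0 //.
- apply: lee_pmul; rewrite ?lee_fin ?divr_ge0 //.
  by apply: le_bigmin => [|tt /hr]; rewrite ?leey ?lee_fin.
- by apply: le_bigmin => [|tt /eqP/hA]; rewrite ?leey.
Qed.

Lemma lhs_ge (M tau : R) (n p : nat) : 0 < M -> 0 < tau -> (0 < n)%N -> (2 <= p)%N ->
  perturb tau n <= M / 3 -> tau ^+ 2 * M ^+ 2 <= n%:R ->
  ((tau ^+ 2 * expR (- (tau ^+ 2 * M ^+ 2) / 2) / (48 * (M^-1 + M / 3) ^+ 2)
    / (n%:R * p%:R))%:E <= lhs M tau n p)%E.
Proof.
move=> M0 tau0 n0 p2 hd hn.
set K := M^-1 + M / 3; set E := expR _.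
have K0 : 0 < K by rewrite addr_gt0 ?invr_gt0 ?divr_gt0.
have E0 : 0 < E := expR_gt0 _.
have nR : 0 < n%:R :> R by rewrite ltr0n.
have pR : 0 < p%:R :> R by rewrite ltr0n ltnW.
set r := tau ^+ 2 / (4 * K ^+ 2 * n%:R * p%:R ^+ 2).
have r0 : 0 <= r by rewrite divr_ge0 ?sqr_ge0 // !mulr_ge0 ?sqr_ge0 ?ltW.
have E2 : 0 <= E / 2 by rewrite divr_ge0 // ltW.
have hr (t t' : {ffun 'I_(p./2) -> bool}) :
    (1 <= hamming t t')%N -> r <= Defs.ratio M tau n t t'.
  exact: ratio_ge (ltnW p2) hd.
have hA (t t' : {ffun 'I_(p./2) -> bool}) :
    hamming t t' = 1%N -> ((E / 2)%:E <= affinity M tau n t t')%E.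
  exact: affinity_ge.
apply: le_trans (lhs_ge_of_bounds r0 E2 hr hA).
have -> : tau ^+ 2 * E / (48 * K ^+ 2) / (n%:R * p%:R) = r * (p%:R / 6) * (E / 2).
  by rewrite /r; field; rewrite !gt_eqF.
have := natr_le_3half p2; rewrite lee_fin ler_pM2r ?divr_gt0 // => h3.
by rewrite ler_wpM2l //; lra.
Qed.

End Bounds.

Unset Implicit Arguments.

Theorem lemma1 (R : realType) (M tau : R) (p : nat -> nat) :
  0 < M -> 0 < tau ->
  (forall K : nat, \forall n \near \oo, (K <= p n)%N) ->
  (forall n : nat, (0 < n)%N -> tau / Num.sqrt (n%:R) <= M / 3) ->
  tau / M <= 3^-1 ->
  exists2 C : R, 0 < C &
    \forall n \near \oo,
      ((C / (n%:R * (p n)%:R))%:E <= lhs M tau n (p n))%E.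
Proof.
move=> M0 tau0 p_big perturb_le _.
set K := M^-1 + M / 3; set E := expR (- (tau ^+ 2 * M ^+ 2) / 2).
exists (tau ^+ 2 * E / (48 * K ^+ 2)).
  by rewrite divr_gt0 ?mulr_gt0 ?exprn_gt0 ?expR_gt0 // addr_gt0 ?invr_gt0 ?divr_gt0.
near=> n.
have n0 : (0 < n)%N by near: n; exact: nbhs_infty_gt.
apply: lhs_ge => //; first by near: n; exact: p_big 2%N.
- exact: perturb_le.
- by near: n; exact: nbhs_infty_ger.
Unshelve. all: end_near.
Qed.
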